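(* Let $\Theta$ be a subset of a Polish space with metric $d$, equipped with its Borel $\sigma$-algebra, let $\nu$ be a probability measure on $\Theta$, and let $\{P^\theta:\theta\in\Theta\}$ be probability measures on $(\Omega,\mathcal{F})$ such that $\theta\mapsto P^\theta(A)$ is Borel measurable for each $A\in\mathcal{F}$ and $\theta\mapsto P^\theta$ is continuous in total variation (for every $\theta$ and $\varepsilon>0$ there is $\delta>0$ with $\sup_{A\in\mathcal{F}}|P^\theta(A)-P^{\theta'}(A)|<\varepsilon$ whenever $d(\theta,\theta')<\delta$). Let $\mathbb{P}(A)=\int_\Theta P^\theta(A)\,\nu(\mathrm{d}\theta)$ be the mixture probability measure. Then $\Theta^0:=\{\theta\in\Theta:P^\theta\not\ll\mathbb{P}\}$ is Borel measurable and $\nu(\Theta^0)=0$.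
   Context: $(\Omega,\mathcal{F})$ is a measurable space. *)

From HB Require Import structures.
From mathcomp Require Import all_boot all_order all_algebra.
From mathcomp Require Import all_classical all_reals all_analysis measurable_realfun.
Set Implicit Arguments. Unset Strict Implicit. Unset Printing Implicit Defensive.
Import Order.TTheory GRing.Theory Num.Theory.
Local Open Scope classical_set_scope.
Local Open Scope ring_scope.

Definition is_metric (R : realType) (X : Type) (d : X -> X -> R) : Prop :=
  [/\ forall x y, 0 <= d x y,
      forall x y, d x y = 0 <-> x = y,
      forall x y, d x y = d y x &
      forall x y z, d x z <= d x y + d y z].

Definition metric_complete (R : realType) (X : Type) (d : X -> X -> R) : Prop :=
  forall u : nat -> X,
    (forall e : R, 0 < e -> exists N : nat, forall m n : nat,
        (N <= m)%N -> (N <= n)%N -> d (u m) (u n) < e) ->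
    exists l : X, forall e : R, 0 < e -> exists N : nat, forall n : nat,
        (N <= n)%N -> d (u n) l < e.

Definition metric_separable (R : realType) (X : Type) (d : X -> X -> R) : Prop :=
  exists D : set X, countable D /\
    forall x e, 0 < e -> exists2 y, D y & d x y < e.

Definition polish (R : realType) (X : Type) (d : X -> X -> R) : Prop :=
  [/\ is_metric d, metric_complete d & metric_separable d].

Definition metric_open (R : realType) (T : Type) (d : T -> T -> R) (A : set T)
  : Prop :=
  forall x, A x -> exists2 e : R, 0 < e & forall y, d x y < e -> A y.

Definition borel_of_metric (R : realType) (dT : measure_display)
  (T : measurableType dT) (d : T -> T -> R) : Prop :=
  @measurable _ T = <<s metric_open d >>.

Definition mixture (R : realType) (dT dO : measure_display)
  (T : measurableType dT) (Om : measurableType dO)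
  (nu : probability T R) (P : T -> probability Om R) : set Om -> \bar R :=
  fun A => (\int[nu]_(th in setT) P th A)%E.

From HB Require Import structures.
From mathcomp Require Import all_boot all_order all_algebra.
From mathcomp Require Import all_classical all_reals all_analysis measurable_realfun.
From mathcomp Require Import lra.
Import Order.TTheory GRing.Theory Num.Theory.
Local Open Scope classical_set_scope.
Local Open Scope ring_scope.

(* If [P^theta(A) > 0] while [mixture A = 0], continuity in total variation
   keeps [P^theta'(A)] above some [c > 0] on a ball around [theta]; every
   point of that ball is again in [Theta^0], so [Theta^0] is open, and
   [c * nu(ball) <= mixture A = 0], so the ball is [nu]-null.  Separability
   makes a set that is locally covered by null balls a countable union of
   null balls. *)

Lemma negligible_bigcup_countable d (T : measurableType d) (R : realType)
    (mu : {measure set T -> \bar R}) I (D : set I) (F : I -> set T) :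
  countable D -> (forall i, D i -> mu.-negligible (F i)) ->
  mu.-negligible (\bigcup_(i in D) F i).
Proof.
move=> /countable_injP[f f_inj] negF.
pose G k := \bigcup_(i in D `&` [set i | f i = k]) F i.
have negG k : mu.-negligible (G k).
  have [[i [Di fi]]|no_i] := pselect (exists i, D i /\ f i = k).
  - apply: negligibleS (negF i Di) => x [j [Dj fj] Fjx].
    by rewrite -(f_inj j i) ?inE // fj fi.
  - apply: negligibleS (negligible_set0 mu) => x [j [Dj fj] _].
    by apply: no_i; exists j.
apply: negligibleS (negligible_bigcup negG) => x [i Di Fix].
by exists (f i) => //; exists i.
Qed.

Lemma not_null_dominatesP d (T : measurableType d) (R : realType)
    (mu : {measure set T -> \bar R}) (nu : set T -> \bar R) :
  {in measurable &, {homo nu : A B / A `<=` B >-> (A <= B)%E}} ->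
  (forall A, measurable A -> (0 <= nu A)%E) ->
  ~ mu `<< nu <-> exists A, [/\ measurable A, nu A = 0%E & (0 < mu A)%E].
Proof.
move=> nu_mono nu_ge0; split.
- move=> not_dom; apply: contrapT => no_A; apply: not_dom => N nuN A mA AN.
  apply/eqP; rewrite -measure_le0 leNgt; apply/negP => muA.
  by apply: no_A; exists A; split => //; exact: nuN.
- move=> [A [mA nuA muA]] dom.
  suff nullA : nu.-null_set A by rewrite (dom A nullA A mA) // ltxx in muA.
  move=> B mB BA; apply/eqP; rewrite eq_le nu_ge0 // andbT -nuA.
  by apply: nu_mono; rewrite ?inE.
Qed.

Section preball.
Context {R : realType} {X : Type} {dX : X -> X -> R}
  {d} {T : measurableType d} {iota : T -> X}.
Hypothesis dX_triangle : forall x y z, dX x z <= dX x y + dX y z.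

(* Centres range over [X]: the countable dense set need not meet [iota @` T]. *)
Definition preball (y : X) (r : R) : set T := iota @^-1` [set x | dX y x < r].

Lemma subset_preball x y r s : dX x y + s <= r ->
  preball y s `<=` preball x r.
Proof.
move=> xysr th yth; rewrite /preball /=.
apply: le_lt_trans (dX_triangle x y _) _.
by apply: lt_le_trans xysr; rewrite ltrD2l.
Qed.

Lemma open_preball y r :
  metric_open (fun th th' => dX (iota th) (iota th')) (preball y r).
Proof.
move=> th yth; exists (r - dX y (iota th)); first by rewrite subr_gt0.
by move=> th'; apply: (@subset_preball y (iota th)); rewrite addrC subrK.
Qed.

Hypothesis T_borel : borel_of_metric (fun th th' => dX (iota th) (iota th')).

Lemma measurable_metric_open (A : set T) :
  metric_open (fun th th' => dX (iota th) (iota th')) A -> measurable A.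
Proof. by rewrite T_borel; exact: sub_sigma_algebra. Qed.

Lemma measurable_preball y r : measurable (preball y r).
Proof. exact/measurable_metric_open/open_preball. Qed.

Hypothesis dX_sym : forall x y, dX x y = dX y x.
Context {D : set X}.
Hypothesis D_countable : countable D.
Hypothesis D_dense : forall x e, 0 < e -> exists2 y, D y & dX x y < e.

Lemma locally_null_negligible (mu : {measure set T -> \bar R}) (S : set T) :
  (forall th, S th -> exists2 r, 0 < r & mu (preball (iota th) r) = 0%E) ->
  mu.-negligible S.
Proof.
(* A null ball of radius [r] around [iota th] contains the ball of radius
   [1/(n+1) < r/2] around any dense point within [1/(n+1)] of [iota th]. *)
move=> S_null.
pose N n := D `&` [set y | mu (preball y n.+1%:R^-1) = 0%E].
have S_cover : S `<=` \bigcup_n \bigcup_(y in N n) preball y n.+1%:R^-1.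
  move=> th /S_null[r r0 null_r].
  have [n] := ltr_add_invr (divr_gt0 r0 (ltr0Sn _ 1)); rewrite add0r => n_small.
  have [y Dy th_y] : exists2 y, D y & dX (iota th) y < n.+1%:R^-1.
    by apply: D_dense; rewrite invr_gt0.
  exists n => //; exists y; last by rewrite /preball /= dX_sym.
  split => //; apply/eqP; rewrite -measure_le0 -null_r.
  apply: le_measure; rewrite ?inE; try exact: measurable_preball.
  apply: (@subset_preball (iota th) y).
  by rewrite [leRHS](splitr r) lerD ?ltW //; exact: lt_trans th_y n_small.
apply: negligibleS S_cover _.
apply: negligible_bigcup => n; apply: negligible_bigcup_countable.
  exact: sub_countable (subset_card_le (@subIsetl _ _ _)) D_countable.
move=> y [_ null_y]; exists (preball y n.+1%:R^-1).
by split => //; exact: measurable_preball.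
Qed.

End preball.
Arguments preball {R X} dX {d T} iota y r.

Lemma total_variation_lower_bound {R : realType} {I} (dI : I -> I -> R)
    {dO} {Om : measurableType dO} {P : I -> probability Om R} {th : I} :
  (forall e : R, 0 < e -> exists2 delta : R, 0 < delta &
     forall th', dI th th' < delta ->
       (ereal_sup [set `|(P th A - P th' A)%E|%E | A in @measurable _ Om]
         < e%:E)%E) ->
  forall A, measurable A -> (0 < P th A)%E ->
  exists2 c : R, 0 < c & exists2 delta : R, 0 < delta &
    forall th', dI th th' < delta -> (c%:E <= P th' A)%E.
Proof.
move=> P_tv A mA PA.
have finP t : P t A \is a fin_num by exact: fin_num_measure.
set c := fine (P th A); have Pc : P th A = c%:E by rewrite fineK.
have c0 : 0 < c by rewrite -lte_fin -Pc.
have [delta delta0 close] := P_tv (c / 2) (divr_gt0 c0 (ltr0Sn _ 1)).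
exists (c / 2); first exact: divr_gt0.
exists delta => // th'.
have dist_A : (`|P th A - P th' A| <=
    ereal_sup [set `|(P th B - P th' B)%E|%E | B in @measurable _ Om])%E.
  by apply: ereal_sup_ubound; exists A.
move=> /close /(le_lt_trans dist_A).
rewrite Pc -(fineK (finP th')) -EFinB abse_EFin !lte_fin ltr_norml => /andP[_].
by move=> ?; rewrite lee_fin; lra.
Qed.

Section mixture.
Context {R : realType} {dT dO} {T : measurableType dT} {Om : measurableType dO}
  {nu : probability T R} {P : T -> probability Om R}.
Hypothesis P_measurable :
  forall A, measurable A -> measurable_fun setT (fun th => P th A).

Lemma le_mixture A B : measurable A -> measurable B -> A `<=` B ->
  (mixture nu P A <= mixture nu P B)%E.
Proof.
move=> mA mB AB; apply: ge0_le_integral => //; try exact: P_measurable.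
by move=> th _; apply: le_measure; rewrite ?inE.
Qed.

Lemma not_dominates_mixtureP th : ~ P th `<< mixture nu P <->
  exists A, [/\ measurable A, mixture nu P A = 0%E & (0 < P th A)%E].
Proof.
apply: not_null_dominatesP => [A B|A _]; last exact: integral_ge0.
by rewrite !inE; exact: le_mixture.
Qed.

Lemma mixture0_null A (S : set T) (c : R) :
  measurable A -> mixture nu P A = 0%E -> measurable S -> 0 < c ->
  (forall th, S th -> (c%:E <= P th A)%E) -> nu S = 0%E.
Proof.
move=> mA A0 mS c0 lbS; apply/eqP; rewrite -measure_le0.
rewrite -(@lee_pmul2l _ c%:E) ?lte_fin // mule0 -A0 -integral_cst //.
have mPA := P_measurable _ mA.
rewrite /mixture.
apply: le_trans
  (@ge0_subset_integral _ _ _ nu _ _ mS measurableT _ mPA _ _) => //.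
apply: ge0_le_integral => //; first by move=> *; rewrite lee_fin ltW.
exact: measurable_funS mPA.
Qed.

End mixture.

Theorem lemma6p9 (R : realType)
  (X : Type) (dX : X -> X -> R) (hX : polish dX)
  (dT : measure_display) (T : measurableType dT) (iota : T -> X)
  (hiota : injective iota)
  (hborel : borel_of_metric (fun th th' => dX (iota th) (iota th')))
  (nu : probability T R)
  (dO : measure_display) (Om : measurableType dO)
  (P : T -> probability Om R)
  (hPmeas : forall A : set Om, measurable A ->
     measurable_fun setT (fun th => P th A))
  (hTV : forall (th : T) (e : R), 0 < e -> exists2 delta : R, 0 < delta &
     forall th' : T, dX (iota th) (iota th') < delta ->
       (ereal_sup [set `|(P th A - P th' A)%E|%E | A in @measurable _ Om] < e%:E)%E) :
  measurable [set th : T | ~ (P th `<< mixture nu P)] /\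
  nu [set th : T | ~ (P th `<< mixture nu P)] = 0%E.
Proof.
case: hX => -[_ _ dX_sym dX_triangle] _ [D [D_countable D_dense]].
set Th0 := [set th | ~ (P th `<< mixture nu P)].
pose dist th th' := dX (iota th) (iota th').
have Th0_null_nbhs th : Th0 th -> exists2 delta : R, 0 < delta &
    preball dX iota (iota th) delta `<=` Th0 /\
    nu (preball dX iota (iota th) delta) = 0%E.
  move=> /(not_dominates_mixtureP hPmeas)[A [mA A0 PA]].
  have [c c0 [delta delta0 lb]] :=
    total_variation_lower_bound dist (hTV th) _ mA PA.
  exists delta => //; split.
    move=> th' /lb PA'; apply/(not_dominates_mixtureP hPmeas).
    by exists A; split => //; exact: lt_le_trans PA'.
  have mball := measurable_preball dX_triangle hborel (iota th) delta.
  exact: mixture0_null hPmeas _ _ _ mA A0 mball c0 lb.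
have mTh0 : measurable Th0.
  apply: (measurable_metric_open hborel).
  move=> th /Th0_null_nbhs[delta delta0 [ball_Th0 _]].
  by exists delta => // th' th_th'; exact: ball_Th0.
split => //; apply: measure_negligible => //.
apply: (locally_null_negligible dX_triangle hborel dX_sym D_countable D_dense).
by move=> th /Th0_null_nbhs[delta delta0 [_ null]]; exists delta.
Qed.
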